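(* Let $(G,c,\{r_1,\dots,r_R\},X)$ be an instance of \textsc{Multi-Rooted Directed Steiner Tree} with $G$ planar. Let $T=F\cup\bigcup_{j=1}^q T_{p_j}$ be a multi-rooted partial arborescence in $G$, where $T_{p_j}$ is a partial arborescence rooted at $r_{p_j}$, and let $C_1,\dots,C_h$ be the weakly connected components of $G\setminus T$. Let $I_{C_1},\dots,I_{C_h}$ be the subinstances induced by $(G,T,C_1,\dots,C_h)$, and let $\mathcal F_{C_i}$ be a feasible solution for $I_{C_i}$. Let $\mathcal F\subseteq E(G)$ be the set of edges of $G$ corresponding to $(E(T)\setminus F)\cup\bigcup_{i=1}^h\mathcal F_{C_i}$. Then $\mathcal F$ is a feasible solution for the instance, and $\mathrm{cost}(\mathcal F)=\mathrm{cost}(T\setminus F)+\sum_{i=1}^h\mathrm{cost}(\mathcal F_{C_i})$.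
   Context: MR-DST: digraph $G=(V,E)$ (parallel edges allowed) with costs $c_e\ge0$, roots $r_1,\dots,r_R$, terminals $X\subseteq V\setminus\{r_1,\dots,r_R\}$; feasible $F\subseteq E$: every terminal is reachable from some root via edges of $F$; cost $\sum_{e\in F}c_e$. A partial arborescence rooted at $r$ is a subgraph containing $r$ that is a directed tree oriented away from $r$. A multi-rooted partial arborescence is a subgraph $T=F\cup\bigcup_{j=1}^q T_{i_j}$ where $T_{i_1},\dots,T_{i_q}$ are vertex-disjoint partial arborescences rooted at roots $r_{i_1},\dots,r_{i_q}$, $F$ is a set of edges not in any $T_{i_j}$ with both endpoints in $\bigcup_j V(T_{i_j})$, and $T$ is weakly connected and contains no cycle in the undirected sense. $\mathrm{cost}(T\setminus F)$ is the total cost of edges of $T$ not in $F$. Induced subinstances: contract $T$ into a single new vertex $r_T$ to get $G_{\mathrm{contract}}$ (edges inherit costs from their originals in $G$); for each $i$, $I_{C_i}=(G_{\mathrm{contract}}[C_i\cup\{r_T\}],c,\{r_T\}\cup(C_i\cap(\{r_1,\dots,r_R\}\setminus\{r_{p_1},\dots,r_{p_q}\})),C_i\cap X)$. $G\setminus T$ deletes $T$'s vertices and incident edges; weakly connected components are components of the underlying undirected graph. *)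

From mathcomp Require Import all_boot all_order all_algebra.
Set Implicit Arguments. Unset Strict Implicit. Unset Printing Implicit Defensive.
Import Order.TTheory GRing.Theory Num.Theory.

(* A digraph with parallel edges: finite vertex type V, finite edge type E,
   with endpoint maps src (tail) and tgt (head). *)
Section Graphs.
Variables (V E : finType) (src tgt : E -> V).

Definition drel (F : {set E}) : rel V :=
  fun u v => [exists e in F, (src e == u) && (tgt e == v)].

Definition urel (F : {set E}) : rel V :=
  fun u v => [exists e in F, ((src e == u) && (tgt e == v))
                          || ((src e == v) && (tgt e == u))].

Definition feasible (Eg : {set E}) (roots X : {set V}) (F : {set E}) : Prop :=
  F \subset Eg /\ forall x, x \in X -> exists2 r, r \in roots & connect (drel F) r x.

Definition cost (R : numDomainType) (c : E -> R) (F : {set E}) : R :=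
  (\sum_(e in F) c e)%R.

Definition partial_arb (r : V) (VA : {set V}) (EA : {set E}) : Prop :=
  [/\ r \in VA,
      forall e, e \in EA -> (src e \in VA) && (tgt e \in VA),
      forall e, e \in EA -> tgt e != r,
      forall v, v \in VA -> v != r -> #|[set e in EA | tgt e == v]| = 1
    & forall v, v \in VA -> connect (drel EA) r v].

(* An undirected cycle in the edge set F: distinct edges e_1..e_k (k >= 1)
   and distinct vertices v_0..v_{k-1}, e_i joining v_{i-1} and v_i (indices mod k). *)
Definition has_ucycle (F : {set E}) : Prop :=
  exists (es : seq E) (vs : seq V),
    [/\ 0 < size es, size vs = size es, uniq es, uniq vs
      & all (fun e => e \in F) es &&
        all (fun t : E * (V * V) =>
               ((src t.1 == t.2.1) && (tgt t.1 == t.2.2))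
               || ((src t.1 == t.2.2) && (tgt t.1 == t.2.1)))
            (zip es (zip vs (rot 1 vs)))].

Definition VT (P : {set V}) (VA : V -> {set V}) : {set V} := \bigcup_(p in P) VA p.
Definition ET (P : {set V}) (EA : V -> {set E}) (F : {set E}) : {set E} :=
  F :|: \bigcup_(p in P) EA p.

(* Multi-rooted partial arborescence: the roots used are P ⊆ Rt (nonempty),
   T_p = (VA p, EA p) for p ∈ P. *)
Definition multi_rooted_parb (Rt P : {set V}) (VA : V -> {set V})
    (EA : V -> {set E}) (F : {set E}) : Prop :=
  [/\ P \subset Rt, P != set0,
      forall p, p \in P -> partial_arb p (VA p) (EA p),
      forall p q, p \in P -> q \in P -> p != q -> [disjoint VA p & VA q]
    & forall p, p \in P -> [disjoint F & EA p]] /\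
  [/\
      forall e, e \in F -> (src e \in VT P VA) && (tgt e \in VT P VA),
      forall u v, u \in VT P VA -> v \in VT P VA -> connect (urel (ET P EA F)) u v
    & ~ has_ucycle (ET P EA F)].

(* Edges of G \ T (T given by its vertex set W) *)
Definition minus_edges (W : {set V}) : {set E} :=
  [set e | (src e \notin W) && (tgt e \notin W)].

Definition components (W : {set V}) : {set {set V}} :=
  [set [set v | (v \notin W) && connect (urel (minus_edges W)) u v] | u in ~: W].

(* Contraction of W into the new vertex r_T = None *)
Definition contr (W : {set V}) (v : V) : option V :=
  if v \in W then None else Some v.
Definition contr_src (W : {set V}) (e : E) : option V := contr W (src e).
Definition contr_tgt (W : {set V}) (e : E) : option V := contr W (tgt e).

(* Edges of G_contract[C ∪ {r_T}]: edges of G whose endpoints lie in C ∪ W,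
   excluding those with both endpoints in W (these disappear under contraction). *)
Definition induced_sub_edges (W C : {set V}) : {set E} :=
  [set e | ((src e \in C) || (src e \in W)) && ((tgt e \in C) || (tgt e \in W))
           && ~~ ((src e \in W) && (tgt e \in W))].

End Graphs.

(* Feasibility for the induced subinstance I_C (vertex type option V,
   None = r_T, edges identified with their originals in G). *)
Definition sub_feasible (V E : finType) (src tgt : E -> V) (W C Rt P X : {set V}) (FC : {set E}) : Prop :=
  @feasible (option V) E (contr_src src W) (contr_tgt tgt W) (induced_sub_edges src tgt W C)
    (None |: [set Some v | v in C :&: (Rt :\: P)])
    [set Some v | v in C :&: X] FC.

From Pilot Require Import Defs.
From mathcomp Require Import all_boot all_order all_algebra.
Import Order.TTheory GRing.Theory Num.Theory.

(* Every edge of E(T) \ F lies inside T, while every edge of a subinstance has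
   an endpoint in its component; so the pieces of the solution are pairwise
   disjoint and the cost splits.  For feasibility, every vertex of T is reached
   from a root along the arborescences, and a path of a subinstance starting at
   r_T or at a root lifts edge by edge to G, each edge leaving r_T being an
   edge leaving some vertex of T. *)

Set Implicit Arguments.
Unset Strict Implicit.
Unset Printing Implicit Defensive.

Lemma connect_ind_Prop (T : finType) (e : rel T) (Q : T -> Prop) :
  (forall a b, Q a -> e a b -> Q b) -> forall a b, connect e a b -> Q a -> Q b.
Proof.
move=> Qe a b /connectP[p + ->]; elim: p a => //= y p IHp a /andP[eay ey_p] Qa.
exact: IHp ey_p (Qe _ _ Qa eay).
Qed.

Lemma connect_drelS (V E : finType) (src tgt : E -> V) (A B : {set E}) u v :
  A \subset B -> connect (drel src tgt A) u v -> connect (drel src tgt B) u v.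
Proof.
move=> sAB; apply: connect_sub => {}u {}v /existsP[e /andP[eA uev]].
by apply/connect1/existsP; exists e; rewrite (subsetP sAB e eA).
Qed.

Section Digraph.

Variables (V E : finType) (src tgt : E -> V).

Local Notation drel := (drel src tgt).
Local Notation urel := (urel src tgt).

Definition reached (Rt : {set V}) (S : {set E}) (v : V) : Prop :=
  exists2 r, r \in Rt & connect (drel S) r v.

Lemma reachedS Rt (A B : {set E}) v : A \subset B -> reached Rt A v -> reached Rt B v.
Proof. by move=> sAB [r Rr /(connect_drelS sAB)]; exists r. Qed.

Lemma reached_drel Rt S u v : reached Rt S u -> drel S u v -> reached Rt S v.
Proof. by move=> [r Rr ru] uv; exists r; last exact: connect_trans ru (connect1 uv). Qed.

Lemma urel_sym S : symmetric (urel S).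
Proof.
by move=> u v; apply/existsP/existsP => -[e /andP[eS uev]]; exists e; rewrite eS orbC.
Qed.

Section Contraction.

Variable W : {set V}.

Local Notation comps := (components src tgt W).
Local Notation ur := (urel (minus_edges src tgt W)).
Local Notation cdrel := (Defs.drel (contr_src src W) (contr_tgt tgt W)).

Lemma componentsP C :
  C \in comps -> exists2 u, u \notin W & C = [set v | (v \notin W) && connect ur u v].
Proof. by case/imsetP => u; rewrite inE => uW ->; exists u. Qed.

Lemma component_of v :
  v \notin W -> exists2 C, C \in comps & v \in C.
Proof.
move=> vW; exists [set w | (w \notin W) && connect ur v w].
  by apply/imsetP; exists v; rewrite ?inE.
by rewrite inE vW connect0.
Qed.

Lemma components_eq C1 C2 v :
  C1 \in comps -> C2 \in comps -> v \in C1 -> v \in C2 -> C1 = C2.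
Proof.
have ur_sym : connect_sym ur by apply/sym_connect_sym/urel_sym.
move=> /componentsP[u1 _ ->] /componentsP[u2 _ ->].
rewrite !inE => /andP[_ u1v] /andP[_ u2v].
by apply/setP => w; rewrite !inE (same_connect ur_sym u1v) (same_connect ur_sym u2v).
Qed.

Lemma induced_sub_edges_out C e :
  e \in induced_sub_edges src tgt W C -> ~~ ((src e \in W) && (tgt e \in W)).
Proof. by rewrite inE => /andP[]. Qed.

Lemma induced_sub_edges_src C e :
  e \in induced_sub_edges src tgt W C -> src e \notin W -> src e \in C.
Proof. by rewrite inE => /andP[/andP[/orP[] // ->]]. Qed.

Lemma induced_sub_edges_tgt C e :
  e \in induced_sub_edges src tgt W C -> tgt e \notin W -> tgt e \in C.
Proof. by rewrite inE => /andP[/andP[_ /orP[] // ->]]. Qed.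

Lemma induced_sub_edges_eq C1 C2 e :
  C1 \in comps -> C2 \in comps ->
  e \in induced_sub_edges src tgt W C1 -> e \in induced_sub_edges src tgt W C2 ->
  C1 = C2.
Proof.
move=> C1c C2c e1 e2; have := induced_sub_edges_out e1; rewrite negb_and.
case/orP=> [sW|tW].
  exact: components_eq C1c C2c (induced_sub_edges_src e1 sW) (induced_sub_edges_src e2 sW).
exact: components_eq C1c C2c (induced_sub_edges_tgt e1 tW) (induced_sub_edges_tgt e2 tW).
Qed.

Lemma induced_sub_edges_disjoint C1 C2 :
  C1 \in comps -> C2 \in comps -> C1 != C2 ->
  [disjoint induced_sub_edges src tgt W C1 & induced_sub_edges src tgt W C2].
Proof.
move=> C1c C2c; apply: contraNT; case/pred0Pn=> e /andP[e1 e2].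
by apply/eqP; exact: induced_sub_edges_eq C1c C2c e1 e2.
Qed.

Lemma contr_drel_lift S a v :
  cdrel S a (Some v) -> exists2 u, drel S u v & contr W u = a.
Proof.
case/existsP=> e /andP[eS /andP[/eqP sa /eqP tv]].
move: tv; rewrite /contr_tgt /contr; case: ifP => // _ [<-].
by exists (src e); first by apply/existsP; exists e; rewrite eS !eqxx.
Qed.

Lemma reached_lift Rt S a x :
  (forall w, w \in W -> reached Rt S w) ->
  (forall u, a = Some u -> reached Rt S u) ->
  connect (cdrel S) a (Some x) ->
  reached Rt S x.
Proof.
move=> reachedW reached_a a_x.
pose Q b := forall u, b = Some u -> reached Rt S u.
suff : Q (Some x) by apply.
apply: (connect_ind_Prop (Q := Q)) a_x reached_a => b [v|] Qb; last by move=> _ ? [].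
case/contr_drel_lift=> u uv ub _ [<-]; apply: reached_drel uv; move: ub; rewrite /contr.
by case: ifP => [uW _|_ /esym]; [exact: reachedW | exact: Qb].
Qed.

Lemma reached_sub_feasible Rt P X C (FC S : {set E}) x :
  sub_feasible src tgt W C Rt P X FC -> FC \subset S ->
  (forall w, w \in W -> reached Rt S w) -> x \in C -> x \in X -> reached Rt S x.
Proof.
move=> subFC sFCS reachedW xC xX; have [_ /(_ (Some x))] := subFC.
case=> [|a roots_a /(connect_drelS sFCS)]; first by apply: imset_f; rewrite inE xC.
apply: reached_lift reachedW _ => u au; exists u; last exact: connect0.
by move: roots_a; rewrite au !inE /= => /imsetP[r]; rewrite !inE => /and3P[_ _ Rtr] [->].
Qed.

End Contraction.

Section MultiRootedArborescence.

Variables (Rt P : {set V}) (VA : V -> {set V}) (EA : V -> {set E}) (F : {set E}).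
Hypothesis mrpa : multi_rooted_parb src tgt Rt P VA EA F.

Lemma ET_minus_F_in_EA e : e \in ET P EA F :\: F -> exists2 p, p \in P & e \in EA p.
Proof. by rewrite !inE => /andP[/negbTE-> /bigcupP[p]]; exists p. Qed.

Lemma ET_minus_F_in_VT e :
  e \in ET P EA F :\: F -> (src e \in VT P VA) && (tgt e \in VT P VA).
Proof.
case/ET_minus_F_in_EA=> p Pp eEA; have [[_ _ arb _ _] _] := mrpa.
have [_ /(_ e eEA)/andP[sV tV] _ _ _] := arb p Pp.
by apply/andP; split; apply/bigcupP; exists p.
Qed.

Lemma ET_minus_F_disjoint_induced C :
  [disjoint ET P EA F :\: F & induced_sub_edges src tgt (VT P VA) C].
Proof.
rewrite disjoint_subset; apply/subsetP => e /ET_minus_F_in_VT eVT.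
by rewrite inE; apply: contraL eVT; exact: induced_sub_edges_out.
Qed.

Lemma EA_sub_ET_minus_F p : p \in P -> EA p \subset ET P EA F :\: F.
Proof.
move=> Pp; have [[_ _ _ _ /(_ p Pp) dFEA] _] := mrpa.
apply/subsetP => e eEA; rewrite !inE (disjointFl dFEA eEA) /=.
by apply/bigcupP; exists p.
Qed.

Lemma reached_VT v : v \in VT P VA -> reached Rt (ET P EA F :\: F) v.
Proof.
case/bigcupP=> p Pp vVA; have [[sPRt _ arb _ _] _] := mrpa.
exists p; first exact: subsetP sPRt p Pp.
have [_ _ _ _ /(_ v vVA)] := arb p Pp; exact: connect_drelS (EA_sub_ET_minus_F Pp).
Qed.

End MultiRootedArborescence.
End Digraph.

Section Cost.

Variables (R : numDomainType) (E : finType) (c : E -> R).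

Lemma cost_setU (A B : {set E}) :
  [disjoint A & B] -> cost c (A :|: B) = (cost c A + cost c B)%R.
Proof.
by move=> dAB; rewrite /cost -bigU //; apply: eq_bigl => e; rewrite !inE.
Qed.

Lemma cost_bigcup (I : finType) (J : {set I}) (S : I -> {set E}) :
  (forall i j, i \in J -> j \in J -> i != j -> [disjoint S i & S j]) ->
  cost c (\bigcup_(i in J) S i) = (\sum_(i in J) cost c (S i))%R.
Proof.
move=> dS; pose S' i := if i \in J then S i else set0.
have -> : \bigcup_(i in J) S i = \bigcup_i S' i by rewrite big_mkcond.
rewrite /cost partition_disjoint_bigcup => [|i j ij]; last first.
  rewrite /S' -setI_eq0; case: ifP => Ji; case: ifP => Jj; rewrite ?set0I ?setI0 //.
  by rewrite setI_eq0; exact: dS.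
rewrite [RHS]big_mkcond; apply: eq_bigr => i _; rewrite /S'.
by case: ifP => // _; rewrite big_set0.
Qed.

End Cost.

Theorem lemma4 (R : realFieldType) (V E : finType) (src tgt : E -> V)
  (c : E -> R) (Rt X : {set V})
  (P : {set V}) (VA : V -> {set V}) (EA : V -> {set E}) (F : {set E})
  (FC : {set V} -> {set E}) :
  (forall e, (0 <= c e)%R) ->
  [disjoint X & Rt] ->
  multi_rooted_parb src tgt Rt P VA EA F ->
  (forall C, C \in components src tgt (VT P VA) ->
     sub_feasible src tgt (VT P VA) C Rt P X (FC C)) ->
  let calF := (ET P EA F :\: F) :|: \bigcup_(C in components src tgt (VT P VA)) FC C in
  feasible src tgt [set: E] Rt X calF /\
  cost c calF = (cost c (ET P EA F :\: F)
                 + \sum_(C in components src tgt (VT P VA)) cost c (FC C))%R.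
Proof.
move=> _ _ mrpa subF calF.
set W := VT P VA; set comps := components src tgt W.
have FC_sub C : C \in comps -> FC C \subset induced_sub_edges src tgt W C.
  by case/subF.
have FC_calF C : C \in comps -> FC C \subset calF.
  by move=> Cc; apply: subset_trans (subsetUr _ _); exact: bigcup_sup.
have reachedW w : w \in W -> reached src tgt Rt calF w.
  by move/(reached_VT mrpa); apply: reachedS; exact: subsetUl.
split.
  split=> [|x Xx]; first exact: subsetT.
  have [xW|xW] := boolP (x \in W); first exact: reachedW.
  have [C Cc xC] := component_of src tgt xW.
  exact: reached_sub_feasible (subF C Cc) (FC_calF C Cc) reachedW xC Xx.
rewrite /calF cost_setU ?cost_bigcup //.
  move=> C1 C2 C1c C2c neqC; apply: disjointW (FC_sub _ C1c) (FC_sub _ C2c) _.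
  exact: induced_sub_edges_disjoint.
apply/bigcup_disjointP => C Cc; apply: disjointWr (FC_sub _ Cc) _.
exact: (ET_minus_F_disjoint_induced mrpa C).
Qed.
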